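(* Let $G$ be a group acting linearly and isometrically on a real Hilbert space $M$, and let $X$ be a random variable in $M$ with $\mathbb{E}(\|X\|^2)<+\infty$ and $t_0=\mathbb{E}(X)$, where $t_0$ is a fixed point of the action ($g\cdot t_0=t_0$ for all $g\in G$). If the support of the law of $X$ contains a point which is not a fixed point of the action, then $[t_0]$ is not a Fréchet mean of $[X]$.
   Context: $M$ is a real Hilbert space with norm $\|\cdot\|$; the action is linear and isometric ($\|g\cdot x\|=\|x\|$). $[m]=\{g\cdot m:g\in G\}$, $d_Q([a],[b])=\inf_{g}\|g\cdot a-b\|$, $F(m)=\mathbb{E}\big(\inf_g\|g\cdot X-m\|^2\big)$, and $[m_\star]$ is a Fréchet mean of $[X]$ if $m_\star$ globally minimises $F$. The support of $X$ is the set of $y$ with $\mathbb{P}(X\in B(y,r))>0$ for all $r>0$. *)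

From HB Require Import structures.
From mathcomp Require Import all_boot all_order all_algebra.
From mathcomp Require monoid.
From mathcomp Require Import all_classical all_reals all_analysis.

Set Implicit Arguments.
Unset Strict Implicit.
Unset Printing Implicit Defensive.

Import Order.TTheory GRing.Theory Num.Theory.
Import numFieldNormedType.Exports.

Local Open Scope classical_set_scope.
Local Open Scope ring_scope.

(* A real Hilbert space: a complete normed space M whose norm comes from the
   inner product [ip] (bilinear -- linear in the first argument and symmetric --
   with <x,x> = ||x||^2; positive definiteness follows from the norm axioms). *)
Definition hilbert_inner (R : realType) (M : completeNormedModType R)
  (ip : M -> M -> R) : Prop :=
  [/\ (forall (a : R) (x y z : M), ip (a *: x + y) z = a * ip x z + ip y z),
      (forall x y : M, ip x y = ip y x) &
      (forall x : M, ip x x = `|x| ^+ 2)].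

Definition linear_isometric_action (R : realType) (M : normedModType R)
  (G : monoid.Group.type) (act : G -> M -> M) : Prop :=
  [/\ (forall x : M, act monoid.one x = x),
      (forall (g h : G) (x : M), act (monoid.mul g h) x = act g (act h x)),
      (forall (g : G) (a : R) (x y : M), act g (a *: x + y) = a *: act g x + act g y) &
      (forall (g : G) (x : M), `|act g x| = `|x|)].

Definition borel_measurable_into d (T : measurableType d) (R : realType)
  (M : normedModType R) (X : T -> M) : Prop :=
  forall U : set M, open U -> measurable (X @^-1` U).

(* The quotient distance d_Q([a],[b]) = inf_g ||g.a - b||. *)
Definition dQ (R : realType) (M : normedModType R) (G : monoid.Group.type)
  (act : G -> M -> M) (a b : M) : R :=
  inf [set `|act g a - b| | g in [set: G]].

Definition frechet_fun d (T : measurableType d) (R : realType)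
  (P : probability T R) (M : normedModType R) (G : monoid.Group.type)
  (act : G -> M -> M) (X : T -> M) (m : M) : \bar R :=
  (\int[P]_w ((dQ act (X w) m) ^+ 2)%:E)%E.

Definition is_frechet_mean d (T : measurableType d) (R : realType)
  (P : probability T R) (M : normedModType R) (G : monoid.Group.type)
  (act : G -> M -> M) (X : T -> M) (mstar : M) : Prop :=
  forall m : M, (frechet_fun P act X mstar <= frechet_fun P act X m)%E.

(* E(X) = t0, as a (weak/Pettis) expectation in the Hilbert space: for every y,
   E(<X, y>) = <t0, y>.  Under E||X||^2 < oo this is the Bochner expectation. *)
Definition expectation_is d (T : measurableType d) (R : realType)
  (P : probability T R) (M : normedModType R) (ip : M -> M -> R)
  (X : T -> M) (t0 : M) : Prop :=
  forall y : M, (\int[P]_w (ip (X w) y)%:E = (ip t0 y)%:E)%E.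

Definition in_support d (T : measurableType d) (R : realType)
  (P : probability T R) (M : normedModType R) (X : T -> M) (y : M) : Prop :=
  forall r : R, 0 < r -> (0 < P (X @^-1` ball y r))%E.

From HB Require Import structures.
From mathcomp Require Import all_boot all_order all_algebra.
From mathcomp Require monoid.
From mathcomp Require Import all_classical all_reals all_analysis.
From mathcomp Require Import lra.

(* Move the candidate mean from [t0] to [m = t0 + e v], where [v = g y - y] for
   a support point [y] moved by [g].  The identity of [G] bounds [dQ(X, m)^2] by
   [|X - t0|^2 - 2e <X - t0, v> + e^2 |v|^2], and when [X] lies within [|v|/4]
   of [y] the element [g] improves this by [e |v|^2].  As [t0] is fixed,
   [F(t0) = E |X - t0|^2], and [E <X - t0, v> = 0], so
   [F(m) <= F(t0) + e^2 |v|^2 - e |v|^2 p] with [p = P(|X - y| < |v|/4) > 0];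
   [e = p/2] makes [F(m) < F(t0)]. *)

Set Implicit Arguments.
Unset Strict Implicit.
Unset Printing Implicit Defensive.

Import Order.TTheory GRing.Theory Num.Theory.
Import numFieldNormedType.Exports.

Local Open Scope classical_set_scope.
Local Open Scope ring_scope.

Section InnerProduct.
Variables (R : realType) (M : completeNormedModType R) (ip : M -> M -> R).
Hypothesis hip : hilbert_inner ip.

Lemma ipC x y : ip x y = ip y x.
Proof. by case: hip. Qed.

Lemma ipxx x : ip x x = `|x| ^+ 2.
Proof. by case: hip. Qed.

Lemma ip0l z : ip 0 z = 0.
Proof.
case: hip => ipl _ _; have := ipl 1 0 0 z.
by rewrite scale1r addr0 mul1r; lra.
Qed.

Lemma ipDl x y z : ip (x + y) z = ip x z + ip y z.
Proof. by case: hip => ipl _ _; rewrite -[x]scale1r ipl mul1r scale1r. Qed.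

Lemma ipZl a x z : ip (a *: x) z = a * ip x z.
Proof. by case: hip => ipl _ _; rewrite -[a *: x]addr0 ipl ip0l addr0. Qed.

Lemma ipNl x z : ip (- x) z = - ip x z.
Proof. by rewrite -scaleN1r ipZl mulN1r. Qed.

Lemma ipBl x y z : ip (x - y) z = ip x z - ip y z.
Proof. by rewrite ipDl ipNl. Qed.

Lemma normD_sqr x y : `|x + y| ^+ 2 = `|x| ^+ 2 + 2 * ip x y + `|y| ^+ 2.
Proof. by rewrite -!ipxx ipDl (ipC x) (ipC y (x + y)) !ipDl (ipC y x); lra. Qed.

Lemma normB_sqr x y : `|x - y| ^+ 2 = `|x| ^+ 2 - 2 * ip x y + `|y| ^+ 2.
Proof. by rewrite normD_sqr normrN (ipC x) ipNl (ipC y); lra. Qed.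

Lemma normB_scale_sqr x (e : R) y :
  `|x - e *: y| ^+ 2 = `|x| ^+ 2 - 2 * e * ip x y + e ^+ 2 * `|y| ^+ 2.
Proof.
by rewrite normB_sqr (ipC x) ipZl (ipC y) normrZ exprMn real_normK ?num_real // mulrA.
Qed.

Lemma normr_ip_le x y : `|ip x y| <= `|x| ^+ 2 + `|y| ^+ 2.
Proof.
have := normD_sqr x y; have := normB_sqr x y.
have := exprn_ge0 2 (normr_ge0 (x + y)); have := exprn_ge0 2 (normr_ge0 (x - y)).
have := exprn_ge0 2 (normr_ge0 x); have := exprn_ge0 2 (normr_ge0 y).
by rewrite ler_norml; move=> *; apply/andP; split; lra.
Qed.

(* [|v| <= |u| + |u - v|] forces [|u - v| <= |u|]; then expand [|u - v|^2]. *)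
Lemma sqr_norm_le_ip u v : `|u - v| <= `|v| / 2 -> `|v| ^+ 2 <= 2 * ip u v.
Proof.
move=> uv; have := normB_sqr u v.
have vu : `|v| <= `|u| + `|u - v|.
  by have := ler_normB u (u - v); rewrite opprB addrC subrK.
have uvu : `|u - v| <= `|u| by lra.
have := ler_pM (normr_ge0 _) (normr_ge0 _) uvu uvu.
by rewrite !expr2; lra.
Qed.

End InnerProduct.

Section IsometricAction.
Variables (R : realType) (M : normedModType R) (G : monoid.Group.type).
Variable act : G -> M -> M.

Lemma dQ_ge0 x m : 0 <= dQ act x m.
Proof.
apply: lb_le_inf; first by exists `|act monoid.one x - m|, monoid.one.
by move=> _ [h _ <-].
Qed.

Lemma dQ_le x m g : dQ act x m <= `|act g x - m|.
Proof. by apply: ge_inf; [exists 0 => _ [h _ <-] | exists g]. Qed.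

Lemma dQ_sqr_le x m g : dQ act x m ^+ 2 <= `|act g x - m| ^+ 2.
Proof. by rewrite lerXn2r ?nnegrE ?dQ_ge0 ?dQ_le. Qed.

Hypothesis hact : linear_isometric_action act.

Lemma act1 x : act monoid.one x = x.
Proof. by case: hact. Qed.

Lemma act_norm g x : `|act g x| = `|x|.
Proof. by case: hact. Qed.

Lemma actB g x y : act g (x - y) = act g x - act g y.
Proof.
case: hact => _ _ actl _.
by rewrite -[x - y]addrC -scaleN1r actl scaleN1r addrC.
Qed.

Lemma dQ_fixed x t : (forall g, act g t = t) -> dQ act x t = `|x - t|.
Proof.
move=> tfix; rewrite /dQ.
have -> : [set `|act g x - t| | g in [set: G]] = [set `|x - t|].
  apply/seteqP; split => r /=; last by move=> ->; exists monoid.one; rewrite ?act1.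
  by case=> g _ <-; rewrite -{1}(tfix g) -actB act_norm.
exact: inf1.
Qed.

End IsometricAction.

Section ShiftedCentre.
Variables (R : realType) (M : completeNormedModType R) (ip : M -> M -> R).
Variables (G : monoid.Group.type) (act : G -> M -> M).
Hypotheses (hip : hilbert_inner ip) (hact : linear_isometric_action act).
Variable t0 : M.

Lemma dQ_shift_sqr_le x (e : R) v :
  dQ act x (t0 + e *: v) ^+ 2 <=
    `|x - t0| ^+ 2 - 2 * e * ip (x - t0) v + e ^+ 2 * `|v| ^+ 2.
Proof.
have := dQ_sqr_le act x (t0 + e *: v) monoid.one.
by rewrite act1 // opprD addrA (normB_scale_sqr hip).
Qed.

Hypothesis t0_fixed : forall g, act g t0 = t0.

(* Take [g] in the infimum: [g x - x] is within [|v|/2] of [v], so its inner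
   product with [v] is at least [|v|^2 / 2]. *)
Lemma dQ_shift_sqr_le_near g y x (e : R) : 0 <= e ->
  let v := act g y - y in `|x - y| < `|v| / 4 ->
  dQ act x (t0 + e *: v) ^+ 2 <=
    `|x - t0| ^+ 2 - 2 * e * ip (x - t0) v + e ^+ 2 * `|v| ^+ 2 - e * `|v| ^+ 2.
Proof.
move=> e0 v xy; pose u := act g x - x.
have gxt0 : act g x - t0 = (x - t0) + u by rewrite /u [RHS]addrC subrKA.
have gx : act g x - t0 = act g (x - t0) by rewrite actB // t0_fixed.
have uv : `|u - v| <= `|v| / 2.
  have -> : u - v = act g (x - y) - (x - y).
    by rewrite actB // /u /v !opprB addrACA [RHS]addrACA [- x + _]addrC.
  by apply: le_trans (ler_normB _ _) _; rewrite act_norm //; lra.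
have vu := sqr_norm_le_ip hip uv.
have := dQ_sqr_le act x (t0 + e *: v) g.
rewrite opprD addrA (normB_scale_sqr hip) {1}gx act_norm // gxt0 (ipDl hip).
have : e * `|v| ^+ 2 <= e * (2 * ip u v) by rewrite ler_wpM2l.
lra.
Qed.

End ShiftedCentre.

Section Integration.
Local Open Scope ereal_scope.
Variables (d : measure_display) (T : measurableType d) (R : realType).

(* No measurability is required: the integral of a nonnegative function is a
   supremum over the simple functions below it. *)
Lemma ge0_le_integralT (mu : {measure set T -> \bar R}) (f g : T -> \bar R) :
  (forall x, 0 <= f x) -> (forall x, f x <= g x) ->
  \int[mu]_x f x <= \int[mu]_x g x.
Proof.
move=> f0 fg; have g0 x : 0 <= g x := le_trans (f0 x) (fg x).
rewrite (ge0_integralTE mu f0) (ge0_integralTE mu g0).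
apply: ereal_sup_le => _ [h hf <-]; exists h => // x.
exact: le_trans (hf x) (fg x).
Qed.

Lemma integrable_EFin_le (mu : {measure set T -> \bar R}) (f g : T -> R) :
  measurable_fun setT f -> mu.-integrable setT (EFin \o g) ->
  (forall x, (`|f x| <= g x)%R) -> mu.-integrable setT (EFin \o f).
Proof.
move=> mf ig fg; apply: le_integrable ig => //.
  exact/measurable_realfun.measurable_EFinP.
move=> x _; rewrite /= lee_fin.
by rewrite (ger0_norm (le_trans (normr_ge0 _) (fg x))).
Qed.

Lemma integrable_EFin_affine (mu : {finite_measure set T -> \bar R}) (f : T -> R)
    (a b : R) :
  mu.-integrable setT (EFin \o f) ->
  mu.-integrable setT (EFin \o (fun x => a * f x + b)%R).
Proof.
move=> intf; rewrite (_ : _ \o _ = (fun x => a%:E * (f x)%:E + b%:E)); last first.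
  by apply/funext => x; rewrite /= EFinD EFinM.
apply: integrableD => //; first exact: integrableZl.
exact: finite_measure_integrable_cst.
Qed.

Lemma measurable_fun_open_preimage (f : T -> R) :
  (forall U : set R, open U -> measurable (f @^-1` U)) -> measurable_fun setT f.
Proof.
move=> fU; apply: (measurability _ (measurable_realfun.RGenOInfty.measurableE R)).
move=> _ [_ [x ->] <-]; apply: measurableI => //.
exact/fU/itv_open_ends_open.
Qed.

End Integration.

Section SquareIntegrable.
Variables (d : measure_display) (T : measurableType d) (R : realType).
Variables (P : probability T R) (M : completeNormedModType R).
Variables (ip : M -> M -> R) (X : T -> M).
Hypotheses (hip : hilbert_inner ip) (hX : borel_measurable_into X).

Lemma measurable_norm_shift u : measurable_fun setT (fun w => `|X w + u|).
Proof.
apply: measurable_fun_open_preimage => U oU.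
have cont : continuous (fun x : M => `|x + u|).
  move=> x; apply: (continuous_comp (f := +%R^~ u)); last exact: norm_continuous.
  by apply: continuousD; [exact: cvg_id | exact: cvg_cst].
exact: (hX (open_comp (fun x _ => cont x) oU)).
Qed.

Lemma measurable_sqr_norm_shift u :
  measurable_fun setT (fun w => `|X w + u| ^+ 2).
Proof. exact/measurable_realfun.measurable_funX/measurable_norm_shift. Qed.

(* Polarisation: 2 <X + u, v> = |X + u + v|^2 - |X + u|^2 - |v|^2. *)
Lemma measurable_ip_shift u v : measurable_fun setT (fun w => ip (X w + u) v).
Proof.
have -> : (fun w => ip (X w + u) v) =
    (fun w => (`|X w + (u + v)| ^+ 2 - `|X w + u| ^+ 2 - `|v| ^+ 2) / 2).
  by apply/funext => w; rewrite addrA (normD_sqr hip); lra.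
apply: measurable_realfun.measurable_funM => //.
apply: measurable_realfun.measurable_funB => //.
by apply: measurable_realfun.measurable_funB; exact: measurable_sqr_norm_shift.
Qed.

Hypothesis hint : (\int[P]_w (`|X w| ^+ 2)%:E < +oo)%E.

Lemma integrable_sqr_norm_shift u :
  P.-integrable setT (EFin \o (fun w => `|X w + u| ^+ 2)).
Proof.
have intX : P.-integrable setT (EFin \o (fun w => `|X w| ^+ 2)).
  apply/integrableP; split.
    apply/measurable_realfun.measurable_EFinP.
    by have := measurable_sqr_norm_shift 0; under eq_fun do rewrite addr0.
  rewrite (eq_integral (fun w => (`|X w| ^+ 2)%:E)) // => w _.
  by rewrite /= normrX normr_id.
apply: (integrable_EFin_le (measurable_sqr_norm_shift u)
  (integrable_EFin_affine 2 (2 * `|u| ^+ 2) intX)) => w.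
rewrite ger0_norm ?exprn_ge0 //.
have := ler_normD (X w) u; have := normr_ge0 (X w + u).
have := sqr_ge0 (`|X w| - `|u|); have := normr_ge0 (X w); have := normr_ge0 u.
by rewrite !expr2; nra.
Qed.

Lemma integrable_ip_shift u v :
  P.-integrable setT (EFin \o (fun w => ip (X w + u) v)).
Proof.
apply: (integrable_EFin_le (measurable_ip_shift u v)
  (integrable_EFin_affine 1 (`|v| ^+ 2) (integrable_sqr_norm_shift u))) => w.
by rewrite mul1r normr_ip_le.
Qed.

End SquareIntegrable.

Section FrechetFunctionAtFixedPoint.
Variables (d : measure_display) (T : measurableType d) (R : realType).
Variables (P : probability T R) (M : completeNormedModType R).
Variables (ip : M -> M -> R) (G : monoid.Group.type) (act : G -> M -> M).
Variables (X : T -> M) (t0 : M).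
Hypotheses (hip : hilbert_inner ip) (hact : linear_isometric_action act).
Hypotheses (hX : borel_measurable_into X).
Hypothesis hint : (\int[P]_w (`|X w| ^+ 2)%:E < +oo)%E.
Hypothesis hE : expectation_is P ip X t0.
Hypothesis t0_fixed : forall g, act g t0 = t0.

Let intA := integrable_sqr_norm_shift hX hint (- t0).
Let intB v := integrable_ip_shift hip hX hint (- t0) v.

Lemma integral_ip_centred v : (\int[P]_w (ip (X w - t0) v)%:E = 0)%E.
Proof.
have := hE v.
rewrite (eq_integral (fun w => (ip (X w - t0) v)%:E + (ip t0 v)%:E)%E).
  rewrite integralD_EFin //; last exact: finite_measure_integrable_cst.
  rewrite /= (integral_cst P measurableT).
  rewrite [X in (_ * X)%E](_ : _ = 1%E); last exact: probability_setT.
  rewrite mule1 => /(congr1 (fun z => z - (ip t0 v)%:E)%E).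
  by rewrite addeK // subee.
by move=> w _; rewrite (ipBl hip) -EFinD subrK.
Qed.

Lemma frechet_fun_fixed :
  frechet_fun P act X t0 = (\int[P]_w (`|X w - t0| ^+ 2)%:E)%E.
Proof. by apply: eq_integral => w _; rewrite (dQ_fixed hact). Qed.

Lemma frechet_fun_shift_le (S : set T) (p e c : R) v :
  measurable S -> P S = p%:E ->
  (forall w, dQ act (X w) (t0 + e *: v) ^+ 2 <=
    `|X w - t0| ^+ 2 - 2 * e * ip (X w - t0) v + e ^+ 2 * `|v| ^+ 2 - c * \1_S w) ->
  (frechet_fun P act X (t0 + e *: v)%R <=
    frechet_fun P act X t0 + (e ^+ 2 * `|v| ^+ 2 - c * p)%:E)%E.
Proof.
move=> mS PS bound; rewrite frechet_fun_fixed.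
pose U w :=
  `|X w - t0| ^+ 2 - 2 * e * ip (X w - t0) v + e ^+ 2 * `|v| ^+ 2 - c * \1_S w.
apply: (@le_trans _ _ (\int[P]_w (U w)%:E)%E).
  by apply: ge0_le_integralT => w; rewrite lee_fin ?bound // exprn_ge0 ?dQ_ge0.
rewrite (_ : (fun w => (U w)%:E) = (fun w => (`|X w - t0| ^+ 2)%:E
    + (- (2 * e))%:E * (ip (X w - t0) v)%:E + (e ^+ 2 * `|v| ^+ 2)%:E
    - c%:E * (\1_S w)%:E)%E); last first.
  by apply/funext => w; rewrite /U EFinB !EFinD !EFinM -mulNr.
have intZB : P.-integrable setT (fun w => (- (2 * e))%:E * (ip (X w - t0) v)%:E)%E.
  exact: integrableZl (intB v).
have intAB := integrableD measurableT intA intZB.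
have intS : P.-integrable setT (fun w => c%:E * (\1_S w)%:E)%E.
  exact/integrableZl/integrable_indic.
have intk := finite_measure_integrable_cst P (e ^+ 2 * `|v| ^+ 2) measurableT.
rewrite integralB ?integralD //; last exact: integrableD.
rewrite (integralZl measurableT (intB v)) integral_ip_centred mule0 adde0.
rewrite integralZl ?integral_indic //; last exact: integrable_indic.
rewrite (integral_cst P measurableT).
rewrite [X in (c%:E * X)%E](_ : _ = p%:E); last by rewrite setIT; exact: PS.
rewrite [X in (_ * X)%E](_ : _ = 1%E); last exact: probability_setT.
by rewrite mule1 -EFinM -addeA -EFinB.
Qed.

End FrechetFunctionAtFixedPoint.

Theorem mainTheorem18 (R : realType) (M : completeNormedModType R)
  (ip : M -> M -> R) (G : monoid.Group.type) (act : G -> M -> M)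
  (d : measure_display) (T : measurableType d) (P : probability T R)
  (X : T -> M) (t0 : M) :
  hilbert_inner ip ->
  linear_isometric_action act ->
  borel_measurable_into X ->
  (\int[P]_w (`|X w| ^+ 2)%:E < +oo)%E ->
  expectation_is P ip X t0 ->
  (forall g : G, act g t0 = t0) ->
  (exists y : M, in_support P X y /\ exists g : G, act g y != y) ->
  ~ is_frechet_mean P act X t0.
Proof.
move=> hip hact hX hint hE t0_fixed [y [ysupp [g gy]]] t0_mean.
pose v := act g y - y; pose c := `|v| ^+ 2.
have c_gt0 : 0 < c by rewrite exprn_gt0 // normr_gt0 subr_eq0.
pose S := X @^-1` ball y (`|v| / 4).
have mS : measurable S by apply/hX/ball_open.
have [p PS p_gt0] : exists2 p : R, P S = p%:E & 0 < p.
  have PS_gt0 : (0 < P S)%E.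
    by apply: ysupp; rewrite divr_gt0 // normr_gt0 subr_eq0.
  have : P S \is a fin_num.
    by rewrite ge0_fin_numE ?(le_lt_trans (probability_le1 P mS)) ?ltry // ltW.
  by move/fineK => PSE; exists (fine (P S)); rewrite // -lte_fin PSE.
pose e := p / 2.
have bound w : dQ act (X w) (t0 + e *: v) ^+ 2 <=
    `|X w - t0| ^+ 2 - 2 * e * ip (X w - t0) v + e ^+ 2 * c - e * c * \1_S w.
  rewrite indicE; have [wS | wS] := boolP (w \in S).
    rewrite mulr1; apply: dQ_shift_sqr_le_near => //.
      by rewrite divr_ge0 // ltW.
    by move: wS; rewrite in_setE /S /= -ball_normE /ball_ /= distrC.
  by rewrite mulr0 subr0; exact: dQ_shift_sqr_le.
have := frechet_fun_shift_le hip hact hX hint hE t0_fixed mS PS bound.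
move=> /(le_trans (t0_mean (t0 + e *: v))).
have : frechet_fun P act X t0 \is a fin_num.
  rewrite (frechet_fun_fixed P X hact t0_fixed).
  exact: integrable_fin_num (integrable_sqr_norm_shift hX hint (- t0)).
move=> /fineK <-; rewrite -EFinD lee_fin -/c /e expr2.
by have := mulr_gt0 (mulr_gt0 p_gt0 p_gt0) c_gt0; nra.
Qed.
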